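(* Let $P$ be the Borel probability measure on $\mathbb{R}$ with density $f(x)=\frac32$ if $x\in J_1:=[0,\frac13]$, $f(x)=\frac94$ if $x\in J_2\cup J_3$ where $J_2:=[\frac23,\frac79]$ and $J_3:=[\frac89,1]$, and $f(x)=0$ otherwise. Let $n\ge3$ and let $\alpha_n$ be an optimal set of $n$-means for $P$. Then: (i) $\alpha_n\cap J_i\neq\emptyset$ for all $1\le i\le3$; (ii) $\alpha_n$ contains no point of the open intervals $(\frac13,\frac23)$ and $(\frac79,\frac89)$; (iii) for $1\le i\neq j\le3$, the Voronoi region of any point of $\alpha_n\cap J_i$ contains no point of $J_j$.
   Context: An optimal set of $n$-means for $P$ is a set $\alpha\subset\mathbb{R}$ with $\mathrm{card}(\alpha)\le n$ attaining $\inf\{\int\min_{a\in\alpha}(x-a)^2\,dP(x):\mathrm{card}(\alpha)\le n\}$. For a finite $\alpha$ and $a\in\alpha$, the Voronoi region of $a$ is $M(a|\alpha)=\{x\in\mathbb{R}:|x-a|=\min_{b\in\alpha}|x-b|\}$. *)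

From Stdlib Require Import Reals Lra List.
From Coquelicot Require Import Coquelicot.
Import ListNotations.
Open Scope R_scope.

Definition dens (x : R) : R :=
  if Rle_dec 0 x then if Rle_dec x (1/3) then 3/2 else
  if Rle_dec (2/3) x then if Rle_dec x (7/9) then 9/4 else
  if Rle_dec (8/9) x then if Rle_dec x 1 then 9/4 else 0 else 0 else 0 else 0.

Definition inJ (i : nat) (x : R) : Prop :=
  match i with
  | 1%nat => 0 <= x <= 1/3
  | 2%nat => 2/3 <= x <= 7/9
  | 3%nat => 8/9 <= x <= 1
  | _ => False
  end.

(* min_{a in l} (x - a)^2, for a nonempty list l (0 for the empty list,
   which is never used since the quantized sets are required nonempty). *)
Definition mind (l : list R) (x : R) : R :=
  match l with
  | [] => 0
  | b :: l' => fold_right (fun c m => Rmin ((x - c) ^ 2) m) ((x - b) ^ 2) l'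
  end.

(* Quantization error  int min_{a in l} (x-a)^2 dP(x) = int_0^1 f(x) min ... dx
   (P has density f, supported in [0,1]). *)
Definition distortion (l : list R) : R := RInt (fun x => dens x * mind l x) 0 1.

Definition optimal_n_means (n : nat) (alpha : list R) : Prop :=
  NoDup alpha /\ (1 <= length alpha <= n)%nat /\
  forall beta : list R, (1 <= length beta <= n)%nat ->
    distortion alpha <= distortion beta.

(* x lies in the Voronoi region M(a|alpha): |x-a| = min_{b in alpha} |x-b|
   (with a in alpha, this is: |x-a| <= |x-b| for all b in alpha). *)
Definition voronoi (a : R) (alpha : list R) (x : R) : Prop :=
  forall b, In b alpha -> Rabs (x - a) <= Rabs (x - b).

From Stdlib Require Import Reals Lra Lia List Classical.
From Coquelicot Require Import Coquelicot.
Import ListNotations.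
Open Scope R_scope.

(* Optimality is used through two kinds of comparison.  Locally: moving one mean
   to a point that is no farther from any point of the support, and strictly
   closer to some point, lowers the distortion.  Hence all means lie in [0, 1],
   and a mean in a gap must be the strict nearest mean of points on both sides of
   the gap, which keeps every other mean far away from it.  Globally: the
   distortion of an optimal set is at most that of the three midpoints of the
   J_i (5/972), and its cost on J_2 u J_3 is at most that of any configuration
   with no more means right of 1/2.  Lower bounds for the cost of the Voronoi
   cells forced by a mean in a gap, or by an interval without a mean, contradict
   these upper bounds.  Part (iii) then follows from (i), since the mean found in
   J_j is strictly nearer to each point of J_j than any point of another J_i. *)

(** * Squared distance to the nearest mean *)

Lemma mind_cons_cons b c l x : mind (b :: c :: l) x = Rmin ((x - c) ^ 2) (mind (b :: l) x).
Proof. reflexivity. Qed.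

Lemma mind_le l x c : In c l -> mind l x <= (x - c) ^ 2.
Proof.
  destruct l as [|b l]; [contradiction|].
  induction l as [|d l IH]; intros Hc.
  - destruct Hc as [->|[]]; apply Rle_refl.
  - rewrite mind_cons_cons.
    destruct Hc as [->|[->|Hc]].
    + eapply Rle_trans; [apply Rmin_r|]. apply IH; left; reflexivity.
    + apply Rmin_l.
    + eapply Rle_trans; [apply Rmin_r|]. apply IH; right; exact Hc.
Qed.

Lemma mind_attained l x : l <> [] -> exists c, In c l /\ mind l x = (x - c) ^ 2.
Proof.
  destruct l as [|b l]; [contradiction|]. intros _.
  induction l as [|d l IH].
  - exists b; split; [left|]; reflexivity.
  - destruct IH as [c [Hc E]]. rewrite mind_cons_cons, E.
    destruct (Rle_dec ((x - d) ^ 2) ((x - c) ^ 2)).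
    + exists d. split; [right; left; reflexivity|]. apply Rmin_left; assumption.
    + exists c. split; [destruct Hc; [left|right; right]; assumption|].
      apply Rmin_right; lra.
Qed.

Lemma mind_glb l x g : l <> [] -> (forall c, In c l -> g <= (x - c) ^ 2) -> g <= mind l x.
Proof. intros Hl H. destruct (mind_attained l x Hl) as [c [Hc ->]]. auto. Qed.

Lemma mind_ge0 l x : 0 <= mind l x.
Proof.
  destruct l as [|b l]; [apply Rle_refl|].
  apply mind_glb; [discriminate|]. intros; apply pow2_ge_0.
Qed.

Lemma mind_pos l x : l <> [] -> ~ In x l -> 0 < mind l x.
Proof.
  intros Hl Hx. destruct (mind_attained l x Hl) as [c [Hc ->]].
  apply pow2_gt_0. intro E. apply Hx. replace x with c by lra. exact Hc.
Qed.

Lemma mind_incl l1 l2 x : l1 <> [] -> incl l1 l2 -> mind l2 x <= mind l1 x.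
Proof.
  intros Hl H. destruct (mind_attained l1 x Hl) as [c [Hc ->]]. apply mind_le, H, Hc.
Qed.

Lemma continuous_Rmin (f g : R -> R) x :
  continuous f x -> continuous g x -> continuous (fun y => Rmin (f y) (g y)) x.
Proof.
  intros Hf Hg.
  apply (continuous_ext (fun y => (f y + g y - Rabs (f y - g y)) / 2)).
  { intro y. unfold Rmin, Rabs. destruct Rle_dec, Rcase_abs; lra. }
  apply (continuous_mult (K := R_AbsRing) (fun y => f y + g y - Rabs (f y - g y)) (fun _ => / 2));
    [|apply continuous_const].
  apply (continuous_minus (V := R_NormedModule) (fun y => f y + g y));
    [apply (continuous_plus (V := R_NormedModule)); assumption|].
  apply continuous_Rabs_comp, (continuous_minus (V := R_NormedModule) f g); assumption.
Qed.

Lemma continuous_sq_dist c x : continuous (fun y => (y - c) ^ 2) x.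
Proof.
  apply (ex_derive_continuous (K := R_AbsRing) (V := R_NormedModule)). auto_derive. exact I.
Qed.

Lemma continuous_mind l x : continuous (mind l) x.
Proof.
  destruct l as [|b l]; [apply continuous_const|].
  induction l as [|d l IH]; [apply continuous_sq_dist|].
  apply (continuous_Rmin (fun y => (y - d) ^ 2) (mind (b :: l)));
    [apply continuous_sq_dist|exact IH].
Qed.

Lemma ex_RInt_mind l u v : ex_RInt (mind l) u v.
Proof. apply (ex_RInt_continuous (V := R_CompleteNormedModule)). intros; apply continuous_mind. Qed.

Lemma ex_RInt_sq_dist c u v : ex_RInt (fun x => (x - c) ^ 2) u v.
Proof.
  apply (ex_RInt_continuous (V := R_CompleteNormedModule)). intros; apply continuous_sq_dist.
Qed.

Lemma RInt_sq_dist c u v : RInt (fun x => (x - c) ^ 2) u v = ((v - c) ^ 3 - (u - c) ^ 3) / 3.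
Proof.
  apply is_RInt_unique.
  replace (((v - c) ^ 3 - (u - c) ^ 3) / 3)
    with (minus ((fun y => (y - c) ^ 3 / 3) v) ((fun y => (y - c) ^ 3 / 3) u))
    by (unfold minus, plus, opp; simpl; field).
  apply (is_RInt_derive (V := R_CompleteNormedModule) (fun y => (y - c) ^ 3 / 3)).
  - intros x _. auto_derive; [exact I|field].
  - intros; apply continuous_sq_dist.
Qed.

Lemma RInt_mind_Chasles l u v w :
  RInt (mind l) u v + RInt (mind l) v w = RInt (mind l) u w.
Proof. apply (RInt_Chasles (V := R_CompleteNormedModule)); apply ex_RInt_mind. Qed.

Lemma RInt_mind_ge0 l u v : u <= v -> 0 <= RInt (mind l) u v.
Proof. intros H. apply RInt_ge_0; [exact H|apply ex_RInt_mind|intros; apply mind_ge0]. Qed.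

Lemma RInt_mind_le l1 l2 u v : u <= v ->
  (forall x, u <= x <= v -> mind l1 x <= mind l2 x) ->
  RInt (mind l1) u v <= RInt (mind l2) u v.
Proof.
  intros Huv H. apply RInt_le; [exact Huv|apply ex_RInt_mind|apply ex_RInt_mind|].
  intros x Hx; apply H; lra.
Qed.

Lemma RInt_mind_lt l1 l2 u v x0 : u < v ->
  (forall x, u <= x <= v -> mind l1 x <= mind l2 x) ->
  u <= x0 <= v -> mind l1 x0 < mind l2 x0 ->
  RInt (mind l1) u v < RInt (mind l2) u v.
Proof.
  intros Huv Hle Hx0 Hlt.
  assert (Hnear : locally x0 (fun x => 0 < minus (mind l2 x) (mind l1 x))).
  { apply (continuous_minus (V := R_NormedModule) (mind l2) (mind l1) x0
             (continuous_mind l2 x0) (continuous_mind l1 x0)).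
    apply (open_gt 0); unfold minus, plus, opp; simpl; lra. }
  destruct Hnear as [d Hd].
  set (w1 := Rmax u (x0 - d / 2)). set (w2 := Rmin v (x0 + d / 2)).
  assert (Hw : u <= w1 /\ w1 < w2 /\ w2 <= v).
  { unfold w1, w2, Rmax, Rmin. pose proof (cond_pos d).
    destruct Rle_dec, Rle_dec; lra. }
  assert (Hmid : RInt (mind l1) w1 w2 < RInt (mind l2) w1 w2).
  { apply RInt_lt; [lra|intros; apply continuous_mind|intros; apply continuous_mind|].
    intros x Hx.
    assert (H : 0 < minus (mind l2 x) (mind l1 x)).
    { apply Hd. change (Rabs (x - x0) < d). apply Rabs_def1;
      unfold w1, w2, Rmax, Rmin in Hx; destruct Rle_dec, Rle_dec; lra. }
    unfold minus, plus, opp in H; simpl in H; lra. }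
  rewrite <- (RInt_mind_Chasles l1 u w1 v), <- (RInt_mind_Chasles l1 w1 w2 v),
    <- (RInt_mind_Chasles l2 u w1 v), <- (RInt_mind_Chasles l2 w1 w2 v).
  assert (RInt (mind l1) u w1 <= RInt (mind l2) u w1)
    by (apply RInt_mind_le; [lra|intros; apply Hle; lra]).
  assert (RInt (mind l1) w2 v <= RInt (mind l2) w2 v)
    by (apply RInt_mind_le; [lra|intros; apply Hle; lra]).
  lra.
Qed.

Lemma RInt_mind_le_sq_dist l c u v : u <= v -> In c l ->
  RInt (mind l) u v <= ((v - c) ^ 3 - (u - c) ^ 3) / 3.
Proof.
  intros Huv Hc. rewrite <- RInt_sq_dist.
  apply RInt_le; [exact Huv|apply ex_RInt_mind|apply ex_RInt_sq_dist|].
  intros; apply mind_le, Hc.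
Qed.

Lemma RInt_mind_ge_sq_dist l c u v w1 w2 : l <> [] -> u <= w1 -> w1 <= w2 -> w2 <= v ->
  (forall x y, w1 <= x <= w2 -> In y l -> (x - c) ^ 2 <= (x - y) ^ 2) ->
  ((w2 - c) ^ 3 - (w1 - c) ^ 3) / 3 <= RInt (mind l) u v.
Proof.
  intros Hl H1 H12 H2 H.
  rewrite <- (RInt_mind_Chasles l u w1 v), <- (RInt_mind_Chasles l w1 w2 v), <- RInt_sq_dist.
  assert (RInt (fun x => (x - c) ^ 2) w1 w2 <= RInt (mind l) w1 w2).
  { apply RInt_le; [exact H12|apply ex_RInt_sq_dist|apply ex_RInt_mind|].
    intros x Hx. apply mind_glb; [exact Hl|]. intros y Hy; apply H; [lra|exact Hy]. }
  pose proof (RInt_mind_ge0 l u w1 H1). pose proof (RInt_mind_ge0 l w2 v H2).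
  lra.
Qed.

Lemma RInt_mind_le_mid l u v m : u <= v -> u + v = 2 * m -> In m l ->
  RInt (mind l) u v <= (v - u) ^ 3 / 12.
Proof.
  intros Huv Hm Hl. eapply Rle_trans; [apply (RInt_mind_le_sq_dist l m); assumption|].
  replace v with (2 * m - u) by lra. right; field.
Qed.

Lemma RInt_mind_le_two_mids l u v m1 m2 : u <= v -> 3 * u + v = 4 * m1 -> u + 3 * v = 4 * m2 ->
  In m1 l -> In m2 l -> RInt (mind l) u v <= (v - u) ^ 3 / 48.
Proof.
  intros Huv Hm1 Hm2 Hl1 Hl2. rewrite <- (RInt_mind_Chasles l u ((u + v) / 2) v).
  pose proof (RInt_mind_le_mid l u ((u + v) / 2) m1 ltac:(lra) ltac:(lra) Hl1).
  pose proof (RInt_mind_le_mid l ((u + v) / 2) v m2 ltac:(lra) ltac:(lra) Hl2).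
  assert (E : ((u + v) / 2 - u) ^ 3 / 12 + (v - (u + v) / 2) ^ 3 / 12 = (v - u) ^ 3 / 48) by field.
  lra.
Qed.

(** * Distortion of the density *)

Definition cost_J1 l := RInt (mind l) 0 (1/3).
Definition cost_J2 l := RInt (mind l) (2/3) (7/9).
Definition cost_J3 l := RInt (mind l) (8/9) 1.

Lemma RInt_dens_mind_const l u v k : u <= v -> (forall x, u < x < v -> dens x = k) ->
  ex_RInt (fun x => dens x * mind l x) u v /\
  RInt (fun x => dens x * mind l x) u v = k * RInt (mind l) u v.
Proof.
  intros Huv H.
  assert (E : forall x, Rmin u v < x < Rmax u v -> k * mind l x = dens x * mind l x).
  { intros x Hx. rewrite Rmin_left, Rmax_right in Hx by lra. rewrite H; auto. }
  split.
  - eapply ex_RInt_ext; [exact E|]. apply (ex_RInt_scal (V := R_NormedModule)), ex_RInt_mind.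
  - rewrite <- (RInt_ext _ _ _ _ E). apply (RInt_scal (V := R_CompleteNormedModule)), ex_RInt_mind.
Qed.

Lemma distortion_split l :
  distortion l = 3/2 * cost_J1 l + 9/4 * cost_J2 l + 9/4 * cost_J3 l.
Proof.
  unfold distortion, cost_J1, cost_J2, cost_J3.
  destruct (RInt_dens_mind_const l 0 (1/3) (3/2)) as [I1 E1];
    [lra|intros; unfold dens; repeat destruct Rle_dec; lra|].
  destruct (RInt_dens_mind_const l (1/3) (2/3) 0) as [I2 E2];
    [lra|intros; unfold dens; repeat destruct Rle_dec; lra|].
  destruct (RInt_dens_mind_const l (2/3) (7/9) (9/4)) as [I3 E3];
    [lra|intros; unfold dens; repeat destruct Rle_dec; lra|].
  destruct (RInt_dens_mind_const l (7/9) (8/9) 0) as [I4 E4];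
    [lra|intros; unfold dens; repeat destruct Rle_dec; lra|].
  destruct (RInt_dens_mind_const l (8/9) 1 (9/4)) as [I5 E5];
    [lra|intros; unfold dens; repeat destruct Rle_dec; lra|].
  assert (I45 := ex_RInt_Chasles _ _ _ _ I4 I5).
  assert (I35 := ex_RInt_Chasles _ _ _ _ I3 I45).
  assert (I25 := ex_RInt_Chasles _ _ _ _ I2 I35).
  rewrite <- (RInt_Chasles _ 0 (1/3) 1 I1 I25), <- (RInt_Chasles _ (1/3) (2/3) 1 I2 I35),
    <- (RInt_Chasles _ (2/3) (7/9) 1 I3 I45), <- (RInt_Chasles _ (7/9) (8/9) 1 I4 I5).
  unfold plus; simpl. rewrite E1, E2, E3, E4, E5. ring.
Qed.

Definition in_support x := 0 <= x <= 1/3 \/ 2/3 <= x <= 7/9 \/ 8/9 <= x <= 1.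

Lemma distortion_lt l1 l2 x0 : (forall x, in_support x -> mind l1 x <= mind l2 x) ->
  in_support x0 -> mind l1 x0 < mind l2 x0 -> distortion l1 < distortion l2.
Proof.
  intros Hle Hx0 Hlt. rewrite !distortion_split. unfold cost_J1, cost_J2, cost_J3.
  assert (A1 : RInt (mind l1) 0 (1/3) <= RInt (mind l2) 0 (1/3))
    by (apply RInt_mind_le; [lra|intros; apply Hle; red; lra]).
  assert (A2 : RInt (mind l1) (2/3) (7/9) <= RInt (mind l2) (2/3) (7/9))
    by (apply RInt_mind_le; [lra|intros; apply Hle; red; lra]).
  assert (A3 : RInt (mind l1) (8/9) 1 <= RInt (mind l2) (8/9) 1)
    by (apply RInt_mind_le; [lra|intros; apply Hle; red; lra]).
  destruct Hx0 as [H|[H|H]].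
  - assert (RInt (mind l1) 0 (1/3) < RInt (mind l2) 0 (1/3)); [|lra].
    apply (RInt_mind_lt _ _ _ _ x0); [lra|intros; apply Hle; red; lra|lra|exact Hlt].
  - assert (RInt (mind l1) (2/3) (7/9) < RInt (mind l2) (2/3) (7/9)); [|lra].
    apply (RInt_mind_lt _ _ _ _ x0); [lra|intros; apply Hle; red; lra|lra|exact Hlt].
  - assert (RInt (mind l1) (8/9) 1 < RInt (mind l2) (8/9) 1); [|lra].
    apply (RInt_mind_lt _ _ _ _ x0); [lra|intros; apply Hle; red; lra|lra|exact Hlt].
Qed.

Lemma distortion_three_means : distortion [1/6; 13/18; 17/18] <= 5/972.
Proof.
  rewrite distortion_split.
  assert (cost_J1 [1/6; 13/18; 17/18] <= (1/3 - 0) ^ 3 / 12)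
    by (apply (RInt_mind_le_mid _ _ _ (1/6)); [lra|lra|simpl; auto]).
  assert (cost_J2 [1/6; 13/18; 17/18] <= (7/9 - 2/3) ^ 3 / 12)
    by (apply (RInt_mind_le_mid _ _ _ (13/18)); [lra|lra|simpl; auto]).
  assert (cost_J3 [1/6; 13/18; 17/18] <= (1 - 8/9) ^ 3 / 12)
    by (apply (RInt_mind_le_mid _ _ _ (17/18)); [lra|lra|simpl; auto]).
  lra.
Qed.

Lemma right_cost_two_means :
  cost_J2 [13/18; 17/18] + cost_J3 [13/18; 17/18] <= 2/8748.
Proof.
  assert (cost_J2 [13/18; 17/18] <= (7/9 - 2/3) ^ 3 / 12)
    by (apply (RInt_mind_le_mid _ _ _ (13/18)); [lra|lra|simpl; auto]).
  assert (cost_J3 [13/18; 17/18] <= (1 - 8/9) ^ 3 / 12)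
    by (apply (RInt_mind_le_mid _ _ _ (17/18)); [lra|lra|simpl; auto]).
  lra.
Qed.

Lemma right_cost_three_means :
  cost_J2 [25/36; 3/4; 17/18] + cost_J3 [25/36; 3/4; 17/18] <= 5/34992.
Proof.
  assert (cost_J2 [25/36; 3/4; 17/18] <= (7/9 - 2/3) ^ 3 / 48)
    by (apply (RInt_mind_le_two_mids _ _ _ (25/36) (3/4)); [lra..|simpl; auto|simpl; auto]).
  assert (cost_J3 [25/36; 3/4; 17/18] <= (1 - 8/9) ^ 3 / 12)
    by (apply (RInt_mind_le_mid _ _ _ (17/18)); [lra|lra|simpl; auto]).
  lra.
Qed.

Lemma right_cost_four_means :
  cost_J2 [25/36; 3/4; 33/36; 35/36] + cost_J3 [25/36; 3/4; 33/36; 35/36] <= 2/34992.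
Proof.
  assert (cost_J2 [25/36; 3/4; 33/36; 35/36] <= (7/9 - 2/3) ^ 3 / 48)
    by (apply (RInt_mind_le_two_mids _ _ _ (25/36) (3/4)); [lra..|simpl; auto|simpl; auto]).
  assert (cost_J3 [25/36; 3/4; 33/36; 35/36] <= (1 - 8/9) ^ 3 / 48)
    by (apply (RInt_mind_le_two_mids _ _ _ (33/36) (35/36)); [lra..|simpl; auto|simpl; auto]).
  lra.
Qed.

Lemma nearer_of_below x c y : y <= c -> c + y <= 2 * x -> (x - c) ^ 2 <= (x - y) ^ 2.
Proof. intros; nra. Qed.

Lemma nearer_of_above x c y : c <= y -> 2 * x <= c + y -> (x - c) ^ 2 <= (x - y) ^ 2.
Proof. intros; nra. Qed.

Ltac solve_nearer :=
  first [ apply Rle_refl | apply nearer_of_below; lra | apply nearer_of_above; lra ].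

Lemma far_from_two_private_points x1 x2 a y : x1 <= a <= x2 ->
  (x1 - a) ^ 2 < (x1 - y) ^ 2 -> (x2 - a) ^ 2 < (x2 - y) ^ 2 ->
  y < 2 * x1 - a \/ 2 * x2 - a < y.
Proof.
  intros Hx H1 H2. destruct (Rlt_le_dec y a).
  - left. assert ((x1 - y) ^ 2 - (x1 - a) ^ 2 = (a - y) * (2 * x1 - y - a)) by ring. nra.
  - right. assert ((x2 - y) ^ 2 - (x2 - a) ^ 2 = (a - y) * (2 * x2 - y - a)) by ring. nra.
Qed.

Lemma gap1_cost_gt a : 1/3 < a < 5/9 ->
  5/972 < 3/2 * ((a - 1/3) ^ 3 / 3) + 9/4 * (((a - 5/9) ^ 3 - (a - 2/3) ^ 3) / 3).
Proof.
  intros Ha.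
  assert (0 <= (a - 1/3 - 9/50) ^ 2 * ((a - 1/3) / 2 + 9/50 + 1/4))
    by (apply Rmult_le_pos; [apply pow2_ge_0|lra]).
  nra.
Qed.

Lemma cubes_ge_of_sum u h s : 0 <= u -> 0 <= s <= h -> u + 2 * h = s + 1/9 ->
  s ^ 3 <= u ^ 3 + 2 * h ^ 3 - s ^ 3 /\ (s + 1/9) ^ 3 / 9 - s ^ 3 <= u ^ 3 + 2 * h ^ 3 - s ^ 3.
Proof.
  intros Hu Hs E. split.
  - assert (s ^ 3 <= h ^ 3) by (apply pow_incr; lra).
    assert (0 <= u ^ 3) by (apply pow_le; lra). lra.
  - (* 9 (u^3 + 2 h^3) - (u + 2 h)^3 = 2 (u - h)^2 (4 u + 5 h) *)
    assert (0 <= (u - h) ^ 2 * (4 * u + 5 * h)) by (apply Rmult_le_pos; [apply pow2_ge_0|lra]).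
    rewrite <- E. nra.
Qed.

Lemma cube_pair_sum_gt s t S1 S2 : s + t = 1/9 -> 0 <= s <= 1/18 ->
  (s + 1/9) ^ 3 / 9 - s ^ 3 <= S1 -> t ^ 3 <= S2 -> 5/11664 < S1 + S2.
Proof. intros E Hs H1 H2. replace t with (1/9 - s) in H2 by lra. nra. Qed.

Lemma three_cells_cost_gt y a z : 7/9 < a < 8/9 -> 2/3 <= y -> y + a < 14/9 ->
  16/9 < a + z -> z <= 1 ->
  5/34992 < (((y + a) / 2 - y) ^ 3 - (2/3 - y) ^ 3) / 3
          + ((7/9 - a) ^ 3 - ((y + a) / 2 - a) ^ 3) / 3
          + (((a + z) / 2 - a) ^ 3 - (8/9 - a) ^ 3) / 3 + ((1 - z) ^ 3 - ((a + z) / 2 - z) ^ 3) / 3.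
Proof.
  intros Ha Hy Hya Haz Hz.
  set (S1 := (y - 2/3) ^ 3 + 2 * ((a - y) / 2) ^ 3 - (a - 7/9) ^ 3).
  set (S2 := (1 - z) ^ 3 + 2 * ((z - a) / 2) ^ 3 - (8/9 - a) ^ 3).
  replace (_ + _ + _ + _) with ((S1 + S2) / 3) by (unfold S1, S2; field).
  destruct (cubes_ge_of_sum (y - 2/3) ((a - y) / 2) (a - 7/9)) as [L1 L1']; [lra..|].
  destruct (cubes_ge_of_sum (1 - z) ((z - a) / 2) (8/9 - a)) as [L2 L2']; [lra..|].
  destruct (Rle_dec (a - 7/9) (1/18)).
  - pose proof (cube_pair_sum_gt (a - 7/9) (8/9 - a) S1 S2 ltac:(lra) ltac:(lra) L1' L2). lra.
  - pose proof (cube_pair_sum_gt (8/9 - a) (a - 7/9) S2 S1 ltac:(lra) ltac:(lra) L2' L1). lra.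
Qed.

Lemma cube_pair_sum_ge s t : 0 <= s -> 0 <= t -> (s + t) ^ 3 / 4 <= s ^ 3 + t ^ 3.
Proof.
  intros Hs Ht. assert (0 <= (s + t) * (s - t) ^ 2) by (apply Rmult_le_pos; [lra|apply pow2_ge_0]).
  nra.
Qed.

(** * Optimal sets of means *)

Definition replace_point (b c : R) (l : list R) :=
  map (fun y => if Req_EM_T y b then c else y) l.

Lemma replace_point_length b c l : length (replace_point b c l) = length l.
Proof. apply length_map. Qed.

Lemma In_replace_point_new b c l : In b l -> In c (replace_point b c l).
Proof.
  intro H. apply in_map_iff. exists b. split; [|exact H]. destruct Req_EM_T; congruence.
Qed.

Lemma In_replace_point_old b c l y : In y l -> y <> b -> In y (replace_point b c l).
Proof.
  intros H Hy. apply in_map_iff. exists y. split; [|exact H]. destruct Req_EM_T; congruence.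
Qed.

Lemma mind_replace_point_le b c l x : In b l ->
  ((x - c) ^ 2 <= (x - b) ^ 2 \/ exists y, In y l /\ y <> b /\ (x - y) ^ 2 <= (x - b) ^ 2) ->
  mind (replace_point b c l) x <= mind l x.
Proof.
  intros Hb H. assert (Hl : l <> []) by (intros ->; contradiction).
  destruct (mind_attained l x Hl) as [z [Hz ->]].
  destruct (Req_dec z b) as [->|Hzb]; [|apply mind_le, In_replace_point_old; assumption].
  destruct H as [H|[y [Hy [Hyb H]]]]; eapply Rle_trans; try exact H; apply mind_le.
  - apply In_replace_point_new, Hb.
  - apply In_replace_point_old; assumption.
Qed.

Lemma exists_not_In (l : list R) u v : u < v -> exists c, u < c < v /\ ~ In c l.
Proof.
  revert u v. induction l as [|a l IH]; intros u v Huv.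
  - exists ((u + v) / 2). split; [lra|auto].
  - destruct (Rlt_dec a ((u + v) / 2)).
    + destruct (IH ((u + v) / 2) v) as [c [Hc Hn]]; [lra|].
      exists c. split; [lra|]. intros [H|H]; [lra|auto].
    + destruct (IH u ((u + v) / 2)) as [c [Hc Hn]]; [lra|].
      exists c. split; [lra|]. intros [H|H]; [lra|auto].
Qed.

Definition private_point (l : list R) (a : R) (S : R -> Prop) :=
  exists x, S x /\ forall y, In y l -> y <> a -> (x - a) ^ 2 < (x - y) ^ 2.

Definition is_right (y : R) : bool := if Rle_dec y (1/2) then false else true.
Definition right_points (l : list R) := filter is_right l.

Lemma In_right_points y l : In y (right_points l) <-> In y l /\ 1/2 < y.
Proof.
  unfold right_points, is_right. rewrite filter_In.
  destruct Rle_dec; split; intros [H1 H2]; split; auto; try discriminate; lra.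
Qed.

Lemma length_right_points_ge l s : NoDup s -> (forall y, In y s -> In y l /\ 1/2 < y) ->
  (length s <= length (right_points l))%nat.
Proof.
  intros Hs H. apply NoDup_incl_length; [exact Hs|]. intros y Hy. apply In_right_points, H, Hy.
Qed.

Section Optimal.

Variables (n : nat) (al : list R).
Hypothesis Hopt : optimal_n_means n al.

Lemma optimal_length : (1 <= length al <= n)%nat.
Proof. apply Hopt. Qed.

Lemma optimal_nonnil : al <> [].
Proof. pose proof optimal_length. destruct al; simpl in *; [lia|discriminate]. Qed.

Lemma optimal_le be : (1 <= length be <= n)%nat -> distortion al <= distortion be.
Proof. apply Hopt. Qed.

Lemma optimal_le_replace_point b c : distortion al <= distortion (replace_point b c al).
Proof. apply optimal_le. rewrite replace_point_length. exact optimal_length. Qed.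

Lemma optimal_replace_fresh a c : In a al -> ~ In c al -> in_support c ->
  (forall x, in_support x ->
     (x - c) ^ 2 <= (x - a) ^ 2 \/ exists y, In y al /\ y <> a /\ (x - y) ^ 2 <= (x - a) ^ 2) ->
  False.
Proof.
  intros Ha Hc Hsc H.
  assert (Hlt : distortion (replace_point a c al) < distortion al).
  { apply (distortion_lt _ _ c); [intros x Hx; apply mind_replace_point_le; auto|exact Hsc|].
    apply Rle_lt_trans with 0.
    - replace 0 with ((c - c) ^ 2) by ring. apply mind_le, In_replace_point_new, Ha.
    - apply mind_pos; [exact optimal_nonnil|exact Hc]. }
  pose proof (optimal_le_replace_point a c). lra.
Qed.

Lemma optimal_private_point a c (S : R -> Prop) : In a al -> c <> a -> in_support c ->
  (forall x, in_support x -> S x \/ (x - c) ^ 2 <= (x - a) ^ 2) ->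
  private_point al a S.
Proof.
  intros Ha Hca Hsc H. apply NNPP. intro Hnp.
  assert (Hother : forall x, S x -> exists y, In y al /\ y <> a /\ (x - y) ^ 2 <= (x - a) ^ 2).
  { intros x Hx. apply NNPP. intro Hno. apply Hnp. exists x. split; [exact Hx|].
    intros y Hy Hya. apply Rnot_le_lt. intro Hle. apply Hno. exists y. auto. }
  destruct (classic (In c al)) as [Hc|Hc].
  - (* a is redundant: move it to a fresh point of J1 *)
    destruct (exists_not_In al 0 (1/3)) as [c' [Hc' Hn]]; [lra|].
    apply (optimal_replace_fresh a c' Ha Hn); [red; lra|].
    intros x Hx. right. destruct (H x Hx) as [HS|Hle]; [apply Hother, HS|exists c; auto].
  - apply (optimal_replace_fresh a c Ha Hc Hsc).
    intros x Hx. destruct (H x Hx) as [HS|Hle]; [right; apply Hother, HS|left; exact Hle].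
Qed.

Lemma optimal_in_unit a : In a al -> 0 <= a <= 1.
Proof.
  intros Ha. destruct (Rlt_le_dec a 0) as [Hneg|H0].
  - destruct (optimal_private_point a 0 (fun _ => False) Ha) as [x [[] _]]; [lra|red; lra|].
    intros x Hx. right. red in Hx. solve_nearer.
  - split; [exact H0|]. apply Rnot_lt_le. intro Hgt.
    destruct (optimal_private_point a 1 (fun _ => False) Ha) as [x [[] _]]; [lra|red; lra|].
    intros x Hx. right. red in Hx. solve_nearer.
Qed.

Hypothesis Hn : (3 <= n)%nat.

Lemma optimal_distortion_le : distortion al <= 5/972.
Proof.
  apply Rle_trans with (distortion [1/6; 13/18; 17/18]); [|apply distortion_three_means].
  apply optimal_le; simpl; lia.
Qed.

Lemma optimal_not_in_gap1 a : In a al -> ~ (1/3 < a < 2/3).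
Proof.
  intros Ha Hgap.
  destruct (optimal_private_point a (1/3) (fun x => 2/3 <= x) Ha) as [x2 [Hx2 P2]];
    [lra|red; lra| |].
  { intros x Hx. destruct (Rle_dec (2/3) x) as [HS|HS];
      [left; exact HS|right; red in Hx; solve_nearer]. }
  destruct (optimal_private_point a (2/3) (fun x => x <= 1/3) Ha) as [x1 [Hx1 P1]];
    [lra|red; lra| |].
  { intros x Hx. destruct (Rle_dec x (1/3)) as [HS|HS];
      [left; exact HS|right; red in Hx; solve_nearer]. }
  assert (Hfar : forall y, In y al -> y <> a -> y < 2/3 - a \/ 4/3 - a < y).
  { intros y Hy Hya. destruct (far_from_two_private_points x1 x2 a y) as [H|H];
      auto; lra. }
  assert (C1 : ((1/3 - (2/3 - a)) ^ 3 - ((2/3 - a) - (2/3 - a)) ^ 3) / 3 <= cost_J1 al).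
  { apply RInt_mind_ge_sq_dist; [exact optimal_nonnil|lra..|].
    intros x y Hx Hy. destruct (Req_dec y a) as [->|Hya]; [solve_nearer|].
    destruct (Hfar y Hy Hya); solve_nearer. }
  pose proof optimal_distortion_le as V. rewrite distortion_split in V.
  pose proof (RInt_mind_ge0 al (8/9) 1 ltac:(lra)) as C3.
  destruct (Rlt_le_dec a (5/9)).
  - assert (C2 : ((7/9 - (4/3 - a)) ^ 3 - (2/3 - (4/3 - a)) ^ 3) / 3 <= cost_J2 al).
    { apply RInt_mind_ge_sq_dist; [exact optimal_nonnil|lra..|].
      intros x y Hx Hy. destruct (Req_dec y a) as [->|Hya]; [solve_nearer|].
      destruct (Hfar y Hy Hya); solve_nearer. }
    pose proof (gap1_cost_gt a ltac:(lra)).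
    unfold cost_J3 in V.
    replace (7/9 - (4/3 - a)) with (a - 5/9) in C2 by field.
    replace (2/3 - (4/3 - a)) with (a - 2/3) in C2 by field.
    replace (1/3 - (2/3 - a)) with (a - 1/3) in C1 by field.
    lra.
  - pose proof (RInt_mind_ge0 al (2/3) (7/9) ltac:(lra)) as C2.
    assert ((2/9) ^ 3 <= (1/3 - (2/3 - a)) ^ 3) by (apply pow_incr; lra).
    unfold cost_J2, cost_J3 in V. lra.
Qed.

Lemma optimal_meets_J1 : exists w, In w al /\ 0 < w <= 1/3.
Proof.
  apply NNPP. intro Hno.
  assert (Hfar : forall y, In y al -> y = 0 \/ 2/3 <= y).
  { intros y Hy. pose proof (optimal_in_unit y Hy). pose proof (optimal_not_in_gap1 y Hy).
    destruct (Rle_dec y (1/3)); [|right; lra].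
    destruct (Req_dec y 0); [left; assumption|].
    exfalso. apply Hno. exists y. split; [exact Hy|lra]. }
  assert (C1 : ((1/3 - 0) ^ 3 - (0 - 0) ^ 3) / 3 <= cost_J1 al).
  { apply RInt_mind_ge_sq_dist; [exact optimal_nonnil|lra..|].
    intros x y Hx Hy. destruct (Hfar y Hy) as [->|?]; solve_nearer. }
  pose proof optimal_distortion_le as V. rewrite distortion_split in V.
  pose proof (RInt_mind_ge0 al (2/3) (7/9) ltac:(lra)).
  pose proof (RInt_mind_ge0 al (8/9) 1 ltac:(lra)).
  unfold cost_J2, cost_J3 in V. lra.
Qed.

Lemma optimal_right_cost_le C : C <> [] -> (length C <= length (right_points al))%nat ->
  cost_J2 al + cost_J3 al <= cost_J2 C + cost_J3 C.
Proof.
  intros HC Hlen. destruct optimal_meets_J1 as [w [Hw Hw']].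
  set (be := filter (fun y => negb (is_right y)) al ++ C).
  assert (Hleft : forall y, In y al -> y <= 1/2 -> In y be).
  { intros y Hy Hy'. apply in_or_app; left. apply filter_In. split; [exact Hy|].
    unfold is_right; destruct Rle_dec; [reflexivity|lra]. }
  assert (Hbe : (1 <= length be <= n)%nat).
  { unfold be. rewrite length_app. pose proof (filter_length is_right al).
    pose proof optimal_length. destruct C; [contradiction|].
    unfold right_points in Hlen. simpl in *. lia. }
  pose proof (optimal_le be Hbe) as D. rewrite !distortion_split in D.
  assert (C1 : cost_J1 be <= cost_J1 al).
  { apply RInt_mind_le; [lra|]. intros x Hx.
    destruct (mind_attained al x optimal_nonnil) as [z [Hz ->]].
    destruct (Rle_dec z (1/2)); [apply mind_le, Hleft; assumption|].
    (* a mean right of 1/2 lies in [2/3, 1], so w serves J_1 at least as well *)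
    apply Rle_trans with ((x - w) ^ 2); [apply mind_le, Hleft; [exact Hw|lra]|].
    pose proof (optimal_not_in_gap1 z Hz). solve_nearer. }
  assert (C23 : forall u v, u <= v -> RInt (mind be) u v <= RInt (mind C) u v).
  { intros u v Huv. apply RInt_mind_le; [exact Huv|]. intros x _.
    apply mind_incl; [exact HC|]. intros y Hy; apply in_or_app; right; exact Hy. }
  pose proof (C23 (2/3) (7/9) ltac:(lra)). pose proof (C23 (8/9) 1 ltac:(lra)).
  unfold cost_J2, cost_J3 in *. lra.
Qed.

Section Gap2.

Variable a : R.
Hypotheses (Ha : In a al) (Hgap : 7/9 < a < 8/9).

Lemma gap2_others_far y : In y al -> y <> a ->
  y <= 1/3 \/ 2/3 <= y < 14/9 - a \/ 16/9 - a < y <= 1.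
Proof.
  intros Hy Hya.
  destruct (optimal_private_point a (7/9) (fun x => 8/9 <= x) Ha) as [x2 [Hx2 P2]];
    [lra|red; lra| |].
  { intros x Hx. destruct (Rle_dec (8/9) x) as [HS|HS];
      [left; exact HS|right; red in Hx; solve_nearer]. }
  destruct (optimal_private_point a (8/9) (fun x => x <= 7/9) Ha) as [x1 [Hx1 P1]];
    [lra|red; lra| |].
  { intros x Hx. destruct (Rle_dec x (7/9)) as [HS|HS];
      [left; exact HS|right; red in Hx; solve_nearer]. }
  (* the other means avoid the reflection (2 x1 - a, 2 x2 - a) of [7/9, 8/9] about a *)
  pose proof (optimal_in_unit y Hy). pose proof (optimal_not_in_gap1 y Hy).
  destruct (far_from_two_private_points x1 x2 a y) as [Hl|Hr]; auto; lra.
Qed.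

Lemma gap2_few_right_points : (length (right_points al) < 4)%nat.
Proof.
  destruct (Nat.lt_ge_cases (length (right_points al)) 4) as [|H4]; [assumption|exfalso].
  pose proof (optimal_right_cost_le [25/36; 3/4; 33/36; 35/36] ltac:(discriminate)
                ltac:(simpl; lia)) as D.
  pose proof right_cost_four_means as C.
  assert (C2 : ((7/9 - (14/9 - a)) ^ 3 - ((14/9 - a) - (14/9 - a)) ^ 3) / 3 <= cost_J2 al).
  { apply RInt_mind_ge_sq_dist; [exact optimal_nonnil|lra..|].
    intros x y Hx Hy. destruct (Req_dec y a) as [->|Hya]; [solve_nearer|].
    destruct (gap2_others_far y Hy Hya) as [?|[?|?]]; solve_nearer. }
  assert (C3 : (((16/9 - a) - (16/9 - a)) ^ 3 - (8/9 - (16/9 - a)) ^ 3) / 3 <= cost_J3 al).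
  { apply RInt_mind_ge_sq_dist; [exact optimal_nonnil|lra..|].
    intros x y Hx Hy. destruct (Req_dec y a) as [->|Hya]; [solve_nearer|].
    destruct (gap2_others_far y Hy Hya) as [?|[?|?]]; solve_nearer. }
  pose proof (cube_pair_sum_ge (a - 7/9) (8/9 - a) ltac:(lra) ltac:(lra)).
  replace (7/9 - (14/9 - a)) with (a - 7/9) in C2 by field.
  replace (8/9 - (16/9 - a)) with (- (8/9 - a)) in C3 by field.
  replace ((a - 7/9) + (8/9 - a)) with (1/9) in * by field.
  lra.
Qed.

Lemma gap2_other_right_point : exists y, In y al /\ y <> a /\ 1/2 < y.
Proof.
  apply NNPP. intro Hno.
  assert (Hleft : forall y, In y al -> y = a \/ y <= 1/3).
  { intros y Hy. destruct (Req_dec y a) as [|Hya]; [left; assumption|right].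
    destruct (gap2_others_far y Hy Hya) as [?|[?|?]];
      [assumption|exfalso; apply Hno; exists y; repeat split; auto; lra..]. }
  assert (C2 : ((7/9 - a) ^ 3 - (2/3 - a) ^ 3) / 3 <= cost_J2 al).
  { apply RInt_mind_ge_sq_dist; [exact optimal_nonnil|lra..|].
    intros x y Hx Hy. destruct (Hleft y Hy) as [->|?]; solve_nearer. }
  assert (C3 : ((1 - a) ^ 3 - (8/9 - a) ^ 3) / 3 <= cost_J3 al).
  { apply RInt_mind_ge_sq_dist; [exact optimal_nonnil|lra..|].
    intros x y Hx Hy. destruct (Hleft y Hy) as [->|?]; solve_nearer. }
  pose proof optimal_distortion_le as V. rewrite distortion_split in V.
  pose proof (RInt_mind_ge0 al 0 (1/3) ltac:(lra)). unfold cost_J1 in V.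
  assert (((7/9 - a) ^ 3 - (2/3 - a) ^ 3) / 3 + ((1 - a) ^ 3 - (8/9 - a) ^ 3) / 3
          = 52/17496 + 2/9 * (a - 5/6) ^ 2) by field.
  pose proof (pow2_ge_0 (a - 5/6)). lra.
Qed.

Lemma gap2_point_below : exists y, In y al /\ 1/2 < y < a.
Proof.
  apply NNPP. intro Hno.
  destruct gap2_other_right_point as [z [Hz [Hza Hz']]].
  assert (Hfar : forall y, In y al -> y <= 1/3 \/ a <= y).
  { intros y Hy. destruct (Req_dec y a) as [->|Hya]; [right; lra|].
    destruct (gap2_others_far y Hy Hya) as [?|[?|?]]; [left; assumption| |right; lra].
    exfalso; apply Hno; exists y; split; [assumption|lra]. }
  assert (Haz : a < z) by (destruct (Hfar z Hz); lra).
  assert (C2 : ((7/9 - 7/9) ^ 3 - (2/3 - 7/9) ^ 3) / 3 <= cost_J2 al).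
  { apply RInt_mind_ge_sq_dist; [exact optimal_nonnil|lra..|].
    intros x y Hx Hy. destruct (Hfar y Hy); solve_nearer. }
  pose proof (RInt_mind_ge0 al (8/9) 1 ltac:(lra)).
  assert (Hlen : (length [a; z] <= length (right_points al))%nat).
  { apply length_right_points_ge; [repeat constructor; simpl; intuition lra|].
    intros y [<-|[<-|[]]]; split; auto; lra. }
  pose proof (optimal_right_cost_le [13/18; 17/18] ltac:(discriminate) Hlen).
  pose proof right_cost_two_means. unfold cost_J3 in *. lra.
Qed.

Lemma gap2_point_above : exists z, In z al /\ a < z.
Proof.
  apply NNPP. intro Hno.
  destruct gap2_other_right_point as [y [Hy [Hya Hy']]].
  assert (Hfar : forall v, In v al -> v <= a).
  { intros v Hv. apply Rnot_lt_le. intro Hlt. apply Hno. exists v. auto. }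
  assert (C3 : ((1 - 8/9) ^ 3 - (8/9 - 8/9) ^ 3) / 3 <= cost_J3 al).
  { apply RInt_mind_ge_sq_dist; [exact optimal_nonnil|lra..|].
    intros x v Hx Hv. pose proof (Hfar v Hv). solve_nearer. }
  pose proof (RInt_mind_ge0 al (2/3) (7/9) ltac:(lra)).
  assert (Hlen : (length [y; a] <= length (right_points al))%nat).
  { pose proof (Hfar y Hy).
    apply length_right_points_ge; [repeat constructor; simpl; intuition lra|].
    intros v [<-|[<-|[]]]; split; auto; lra. }
  pose proof (optimal_right_cost_le [13/18; 17/18] ltac:(discriminate) Hlen).
  pose proof right_cost_two_means. unfold cost_J2 in *. lra.
Qed.

Lemma gap2_three_right_points y z : In y al -> In z al -> 1/2 < y < a -> a < z ->
  (forall v, In v al -> 1/2 < v -> v = y \/ v = a \/ v = z) -> False.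
Proof.
  intros Hy Hz Hya Haz Hright.
  assert (Hy' : 2/3 <= y < 14/9 - a)
    by (destruct (gap2_others_far y Hy ltac:(lra)) as [?|[?|?]]; lra).
  assert (Hz' : 16/9 - a < z <= 1)
    by (destruct (gap2_others_far z Hz ltac:(lra)) as [?|[?|?]]; lra).
  assert (Hcl : forall v, In v al -> v <= 1/3 \/ v = y \/ v = a \/ v = z).
  { intros v Hv. pose proof (optimal_in_unit v Hv). pose proof (optimal_not_in_gap1 v Hv).
    destruct (Rle_dec v (1/2)); [left; lra|right; apply Hright; [exact Hv|lra]]. }
  set (m := (y + a) / 2). set (m' := (a + z) / 2).
  assert (Hm : 2/3 <= m <= 7/9) by (unfold m; lra).
  assert (Hm' : 8/9 <= m' <= 1) by (unfold m'; lra).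
  assert (B1 : ((m - y) ^ 3 - (2/3 - y) ^ 3) / 3 <= RInt (mind al) (2/3) m).
  { apply RInt_mind_ge_sq_dist; [exact optimal_nonnil|lra..|].
    intros x v Hx Hv. unfold m in Hx. destruct (Hcl v Hv) as [?|[-> | [-> | ->]]]; solve_nearer. }
  assert (B2 : ((7/9 - a) ^ 3 - (m - a) ^ 3) / 3 <= RInt (mind al) m (7/9)).
  { apply RInt_mind_ge_sq_dist; [exact optimal_nonnil|lra..|].
    intros x v Hx Hv. unfold m in Hx. destruct (Hcl v Hv) as [?|[-> | [-> | ->]]]; solve_nearer. }
  assert (B3 : ((m' - a) ^ 3 - (8/9 - a) ^ 3) / 3 <= RInt (mind al) (8/9) m').
  { apply RInt_mind_ge_sq_dist; [exact optimal_nonnil|lra..|].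
    intros x v Hx Hv. unfold m' in Hx. destruct (Hcl v Hv) as [?|[-> | [-> | ->]]]; solve_nearer. }
  assert (B4 : ((1 - z) ^ 3 - (m' - z) ^ 3) / 3 <= RInt (mind al) m' 1).
  { apply RInt_mind_ge_sq_dist; [exact optimal_nonnil|lra..|].
    intros x v Hx Hv. unfold m' in Hx. destruct (Hcl v Hv) as [?|[-> | [-> | ->]]]; solve_nearer. }
  pose proof (three_cells_cost_gt y a z ltac:(lra) ltac:(lra) ltac:(lra) ltac:(lra) ltac:(lra))
    as Hgt.
  fold m m' in Hgt.
  assert (Hlen : (length [y; a; z] <= length (right_points al))%nat).
  { apply length_right_points_ge; [repeat constructor; simpl; intuition lra|].
    intros v [<-|[<-|[<-|[]]]]; split; auto; lra. }
  pose proof (optimal_right_cost_le [25/36; 3/4; 17/18] ltac:(discriminate) Hlen).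
  pose proof right_cost_three_means.
  unfold cost_J2, cost_J3 in *.
  rewrite <- (RInt_mind_Chasles al (2/3) m (7/9)), <- (RInt_mind_Chasles al (8/9) m' 1) in *.
  lra.
Qed.

Lemma gap2_absurd : False.
Proof.
  destruct gap2_point_below as [y [Hy Hya]].
  destruct gap2_point_above as [z [Hz Haz]].
  apply (gap2_three_right_points y z Hy Hz Hya Haz).
  intros v Hv Hv'. apply NNPP. intro Hnot.
  pose proof gap2_few_right_points.
  assert (length [y; a; z; v] <= length (right_points al))%nat; [|simpl in *; lia].
  apply length_right_points_ge; [repeat constructor; simpl; intuition lra|].
  intros u [<-|[<-|[<-|[<-|[]]]]]; split; auto; lra.
Qed.

End Gap2.

Lemma optimal_not_in_gap2 a : In a al -> ~ (7/9 < a < 8/9).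
Proof. exact (gap2_absurd a). Qed.

Lemma optimal_meets_J3 : exists b, In b al /\ 8/9 <= b < 1.
Proof.
  apply NNPP. intro Hno.
  assert (Hcl : forall y, In y al -> y <= 7/9 \/ y = 1).
  { intros y Hy. pose proof (optimal_in_unit y Hy).
    destruct (Rle_dec y (7/9)); [left; assumption|right].
    destruct (Rlt_le_dec y (8/9)); [exfalso; apply (optimal_not_in_gap2 y Hy); lra|].
    destruct (Req_dec y 1); [assumption|exfalso; apply Hno; exists y; split; [exact Hy|lra]]. }
  pose proof (RInt_mind_ge0 al 0 (1/3) ltac:(lra)).
  pose proof (RInt_mind_ge0 al (2/3) (7/9) ltac:(lra)).
  destruct (classic (In 1 al)) as [H1|H1].
  - set (be := replace_point 1 (17/18) al).
    pose proof (optimal_le_replace_point 1 (17/18)) as D. fold be in D.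
    rewrite !distortion_split in D.
    assert (Hbe : forall u v, u <= v -> v <= 7/9 -> RInt (mind be) u v <= RInt (mind al) u v).
    { intros u v Huv Hv. apply RInt_mind_le; [exact Huv|]. intros x Hx.
      apply mind_replace_point_le; [exact H1|left; solve_nearer]. }
    pose proof (Hbe 0 (1/3) ltac:(lra) ltac:(lra)).
    pose proof (Hbe (2/3) (7/9) ltac:(lra) ltac:(lra)).
    pose proof (RInt_mind_le_mid be (8/9) 1 (17/18) ltac:(lra) ltac:(lra)
                  (In_replace_point_new _ _ _ H1)).
    assert (C3 : ((1 - 1) ^ 3 - (8/9 - 1) ^ 3) / 3 <= cost_J3 al).
    { apply RInt_mind_ge_sq_dist; [exact optimal_nonnil|lra..|].
      intros x y Hx Hy. destruct (Hcl y Hy) as [?| ->]; solve_nearer. }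
    unfold cost_J1, cost_J2, cost_J3 in *. lra.
  - assert (C3 : ((1 - 7/9) ^ 3 - (8/9 - 7/9) ^ 3) / 3 <= cost_J3 al).
    { apply RInt_mind_ge_sq_dist; [exact optimal_nonnil|lra..|].
      intros x y Hx Hy. destruct (Hcl y Hy) as [?| ->]; [solve_nearer|contradiction]. }
    pose proof optimal_distortion_le as V. rewrite distortion_split in V.
    unfold cost_J1, cost_J2 in *. lra.
Qed.

Lemma optimal_meets_J2 : exists b, In b al /\ 2/3 < b <= 7/9.
Proof.
  apply NNPP. intro Hno.
  destruct optimal_meets_J1 as [w [Hw Hw']].
  assert (Hcl : forall y, In y al -> y <= 1/3 \/ y = 2/3 \/ 8/9 <= y).
  { intros y Hy. destruct (Rle_dec y (1/3)); [left; assumption|right].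
    destruct (Rlt_le_dec y (2/3)); [exfalso; apply (optimal_not_in_gap1 y Hy); lra|].
    destruct (Req_dec y (2/3)); [left; assumption|right].
    destruct (Rle_dec y (7/9)); [exfalso; apply Hno; exists y; split; [exact Hy|lra]|].
    destruct (Rlt_le_dec y (8/9)); [exfalso; apply (optimal_not_in_gap2 y Hy); lra|assumption]. }
  pose proof (RInt_mind_ge0 al 0 (1/3) ltac:(lra)).
  pose proof (RInt_mind_ge0 al (8/9) 1 ltac:(lra)).
  destruct (classic (In (2/3) al)) as [H1|H1].
  - set (be := replace_point (2/3) (13/18) al).
    pose proof (optimal_le_replace_point (2/3) (13/18)) as D. fold be in D.
    rewrite !distortion_split in D.
    assert (C1 : cost_J1 be <= cost_J1 al).
    { apply RInt_mind_le; [lra|]. intros x Hx. apply mind_replace_point_le; [exact H1|right].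
      exists w. split; [exact Hw|split; [lra|solve_nearer]]. }
    assert (C3 : cost_J3 be <= cost_J3 al).
    { apply RInt_mind_le; [lra|]. intros x Hx.
      apply mind_replace_point_le; [exact H1|left; solve_nearer]. }
    pose proof (RInt_mind_le_mid be (2/3) (7/9) (13/18) ltac:(lra) ltac:(lra)
                  (In_replace_point_new _ _ _ H1)).
    assert (C2 : ((7/9 - 2/3) ^ 3 - (2/3 - 2/3) ^ 3) / 3 <= cost_J2 al).
    { apply RInt_mind_ge_sq_dist; [exact optimal_nonnil|lra..|].
      intros x y Hx Hy. destruct (Hcl y Hy) as [?|[-> | ?]]; solve_nearer. }
    unfold cost_J2 in *. lra.
  - assert (C2 : ((7/9 - 8/9) ^ 3 - (2/3 - 8/9) ^ 3) / 3 <= cost_J2 al).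
    { apply RInt_mind_ge_sq_dist; [exact optimal_nonnil|lra..|].
      intros x y Hx Hy.
      destruct (Hcl y Hy) as [?|[-> | ?]]; [solve_nearer|contradiction|solve_nearer]. }
    pose proof optimal_distortion_le as V. rewrite distortion_split in V.
    unfold cost_J1, cost_J3 in *. lra.
Qed.

End Optimal.

Lemma nearer_not_voronoi a b l x : In b l -> Rabs (x - b) < Rabs (x - a) -> ~ voronoi a l x.
Proof. intros Hb Hlt Hv. specialize (Hv b Hb). lra. Qed.

Theorem proposition5p7 (n : nat) (alpha : list R) :
  (3 <= n)%nat -> optimal_n_means n alpha ->
  (forall i : nat, (1 <= i <= 3)%nat -> exists a, In a alpha /\ inJ i a) /\
  (forall a, In a alpha -> ~ (1/3 < a < 2/3) /\ ~ (7/9 < a < 8/9)) /\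
  (forall i j : nat, (1 <= i <= 3)%nat -> (1 <= j <= 3)%nat -> i <> j ->
     forall a, In a alpha -> inJ i a ->
     forall x, inJ j x -> ~ voronoi a alpha x).
Proof.
  intros Hn Hopt.
  destruct (optimal_meets_J1 n alpha Hopt Hn) as [w1 [Hw1 Hw1']].
  destruct (optimal_meets_J2 n alpha Hopt Hn) as [w2 [Hw2 Hw2']].
  destruct (optimal_meets_J3 n alpha Hopt Hn) as [w3 [Hw3 Hw3']].
  split; [|split].
  - intros i Hi. destruct i as [|[|[|[|i]]]]; try lia;
      [exists w1|exists w2|exists w3]; simpl; split; auto; lra.
  - intros a Ha. split.
    + exact (optimal_not_in_gap1 n alpha Hopt Hn a Ha).
    + exact (optimal_not_in_gap2 n alpha Hopt Hn a Ha).
  - intros i j Hi Hj Hij a Ha Hia x Hxj.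
    destruct i as [|[|[|[|i]]]]; try lia; destruct j as [|[|[|[|j]]]]; try lia;
      simpl in Hia, Hxj;
      [ apply (nearer_not_voronoi a w2) | apply (nearer_not_voronoi a w3)
      | apply (nearer_not_voronoi a w1) | apply (nearer_not_voronoi a w3)
      | apply (nearer_not_voronoi a w1) | apply (nearer_not_voronoi a w2) ];
      auto; unfold Rabs; repeat destruct Rcase_abs; lra.
Qed.
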